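(* Let $r\ge 2$ and $m$ be integers with $0\le 2m\le r$, $n=2r-4m$, and let $f:S^2(S^r(\mathbb{C}^2))\to S^{n}(\mathbb{C}^2)$ be an $\mathfrak{sl}_2(\mathbb{C})$-equivariant linear map, written $f=\sum_{k=0}^n q_k w_k$. Let $\lambda=q_0(x_0x_{2m})$. Then for every $0\le k\le n/2$, every $0\le i\le r$, and $j=2m+k-i$, $$\binom{n}{k}q_k(x_ix_j)=\lambda\sum_{s=\max(0,i-k)}^{\min(2m,i)}(-1)^s\binom{2m}{s}\binom{r-s}{r-i}\binom{r-2m+s}{r-j},$$ where binomial coefficients $\binom{a}{b}$ that do not make sense (e.g. $b<0$, $a<0$ or $b>a$) are taken to be $0$, and $x_l=0$ for $l\notin[0,r]$.
   Context: $\mathfrak{sl}_2(\mathbb{C})$ has basis $X=\begin{pmatrix}0&1\\0&0\end{pmatrix}$, $H=\begin{pmatrix}1&0\\0&-1\end{pmatrix}$, $Y=\begin{pmatrix}0&0\\1&0\end{pmatrix}$, acting on the irreducible modules $S^d(\mathbb{C}^2)$. Let $x_0\in S^r(\mathbb{C}^2)$ be a highest weight vector and $x_i=Y^ix_0/i!$ ($0\le i\le r$), so $Yx_i=(i+1)x_{i+1}$, $Xx_i=(r-i+1)x_{i-1}$, $Hx_i=(r-2i)x_i$. Let $w_0\in S^n(\mathbb{C}^2)$ be a highest weight vector and $w_k=Y^kw_0/k!$ ($0\le k\le n$). Writing $f=\sum_{k=0}^n q_kw_k$ means $f(u)=\sum_k q_k(u)w_k$ for linear forms $q_k$ on $S^2(S^r(\mathbb{C}^2))$;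 $q_k(x_ix_j)$ is the value on the product $x_ix_j$. *)

From HB Require Import structures.
From mathcomp Require Import all_boot all_order all_algebra all_field.
Set Implicit Arguments. Unset Strict Implicit. Unset Printing Implicit Defensive.
Import Order.TTheory GRing.Theory Num.Theory.
Local Open Scope ring_scope.

(* The irreducible sl_2(C)-module S^d(C^2) is modelled as column vectors
   'cV[algC]_(d.+1), with basis vector number l (0 <= l <= d) = delta_mx l 0
   (the vector x_l = Y^l x_0 / l!).  The matrices below give the action of
   X, H, Y in this basis:
     Y x_l = (l+1) x_(l+1),  X x_l = (d-l+1) x_(l-1),  H x_l = (d-2l) x_l. *)
Definition sl2Y (d : nat) : 'M[algC]_(d.+1) :=
  \matrix_(a, b) (if (a : nat) == b.+1 then (b.+1)%:R else 0).
Definition sl2X (d : nat) : 'M[algC]_(d.+1) :=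
  \matrix_(a, b) (if (a.+1 == b :> nat) then ((d - b).+1)%:R else 0).
Definition sl2H (d : nat) : 'M[algC]_(d.+1) :=
  \matrix_(a, b) (if a == b then d%:R - 2 * (b : nat)%:R else 0).

(* basis vector x_l of S^d(C^2), with the convention x_l = 0 for l outside [0,d] *)
Definition bvec (d : nat) (l : int) : 'cV[algC]_(d.+1) :=
  match l with
  | Posz l' => if (l' <= d)%N then delta_mx (inord l') 0 else 0
  | Negz _ => 0
  end.

(* A linear map f : S^2(V) -> W is the same thing as a symmetric bilinear map
   B : V -> V -> W, via f(u v) = B u v. *)
Definition sym_bilinear (p q : nat)
    (B : 'cV[algC]_p -> 'cV[algC]_p -> 'cV[algC]_q) : Prop :=
  (forall u a v w, B u (a *: v + w) = a *: B u v + B u w) /\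
  (forall u v, B u v = B v u).

(* sl_2-equivariance of f : S^2(S^r C^2) -> S^n C^2, where Z(u v) = (Zu) v + u (Zv). *)
Definition sl2_equivariant (r n : nat)
    (B : 'cV[algC]_(r.+1) -> 'cV[algC]_(r.+1) -> 'cV[algC]_(n.+1)) : Prop :=
  (forall u v, B (sl2X r *m u) v + B u (sl2X r *m v) = sl2X n *m B u v) /\
  (forall u v, B (sl2H r *m u) v + B u (sl2H r *m v) = sl2H n *m B u v) /\
  (forall u v, B (sl2Y r *m u) v + B u (sl2Y r *m v) = sl2Y n *m B u v).

(* q_k(x_i x_j) : coefficient of w_k in f(x_i x_j) *)
Definition qcoef (r n : nat)
    (B : 'cV[algC]_(r.+1) -> 'cV[algC]_(r.+1) -> 'cV[algC]_(n.+1))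
    (k : nat) (i j : int) : algC :=
  B (bvec r i) (bvec r j) (inord k) 0.

Definition binomZ (a b : int) : algC :=
  match a, b with
  | Posz a', Posz b' => ('C(a', b'))%:R
  | _, _ => 0
  end.

From HB Require Import structures.
From mathcomp Require Import all_boot all_order all_algebra all_field.
From mathcomp Require Import zify ring.
Import Order.TTheory GRing.Theory Num.Theory.
Local Open Scope ring_scope.

(* Write S(b, e) = sum_(0 <= s <= 2m) (-1)^s C(2m, s) C(r - s, b) C(r - 2m + s, e).
   Taking the w_0-coefficient of Y-equivariance gives
   (i+1) q_0(x_(i+1) x_j) + (j+1) q_0(x_i x_(j+1)) = 0, which forces
   q_0(x_i x_(2m-i)) = (-1)^i C(2m, i) lambda = lambda S(r - i, r - 2m + i).
   Taking the w_k-coefficient of X-equivariance gives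
   (n-k) q_(k+1)(x_i x_j) = (r-i+1) q_k(x_(i-1) x_j) + (r-j+1) q_k(x_i x_(j-1)),
   and absorbing one factor in each binomial shows that S satisfies the same
   recurrence: (2r - 2m - b - e) S(b, e) = (b+1) S(b+1, e) + (e+1) S(b, e+1).
   Induction on k then gives C(n, k) q_k(x_i x_j) = lambda S(r - i, r - j) for all
   integer i + j = 2m + k; the stated sum is S with its vanishing terms dropped. *)

Lemma binomZ_nat (a b : nat) : binomZ a b = ('C(a, b))%:R.
Proof. by []. Qed.

Lemma binomZ_small (a b : int) : a < b -> binomZ a b = 0.
Proof. by case: a => a; case: b => // b; rewrite ltz_nat => /bin_small /= ->. Qed.

Lemma mul_binomZ_left (a b : int) :
  (b + 1)%:~R * binomZ a (b + 1) = (a - b)%:~R * binomZ a b.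
Proof.
case: a => [a|a]; last by rewrite !mulr0.
case: b => [b|[|b]]; rewrite ?mulr0 // ?addNr ?mul0r //.
rewrite -PoszD addn1 /= -!natrM mul_bin_left.
have [le_ba|lt_ab] := leqP b a; first by rewrite natrM subzn.
by rewrite bin_small // !muln0 mulr0.
Qed.

Lemma bvecE d (l : int) (a : 'I_d.+1) : bvec d l a 0 = (a%:Z == l)%:R.
Proof.
case: l => [l|l] //=; rewrite /bvec; last by rewrite mxE.
have [le_ld|lt_dl] := leqP l d.
  by rewrite mxE eqxx andbT -val_eqE /= inordK.
by rewrite mxE; case: eqP => // [[e]]; have := ltn_ord a; lia.
Qed.

Lemma sl2Y_coef d (v : 'cV[algC]_d.+1) (a : 'I_d.+1) :
  (sl2Y d *m v) a 0 = a%:R * v (inord a.-1) 0.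
Proof.
rewrite mxE; case: (posnP a) => [a0|a_gt0].
  by rewrite a0 mul0r big1 // => b _; rewrite mxE a0 mul0r.
rewrite (bigD1 (inord a.-1)) //= big1 ?addr0.
  by rewrite mxE inordK ?prednK // ?eqxx // ltnW.
move=> b nb; rewrite mxE; case: eqP => [e|]; last by rewrite mul0r.
by case/eqP: nb; apply: val_inj; rewrite /= e /= inordK.
Qed.

Lemma sl2X_coef d (v : 'cV[algC]_d.+1) (a : 'I_d.+1) :
  (sl2X d *m v) a 0 = (d - a)%:R * v (inord a.+1) 0.
Proof.
rewrite mxE; have [lt_ad|] := ltnP a d; last first.
  move=> le_da; rewrite (_ : d - a = 0)%N ?mul0r; last by have := ltn_ord a; lia.
  rewrite big1 // => b _; rewrite mxE; case: eqP => [e|]; last by rewrite mul0r.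
  by exfalso; have := ltn_ord b; lia.
rewrite (bigD1 (inord a.+1)) //= big1 ?addr0.
  by rewrite mxE inordK // eqxx; congr (_%:R * _); lia.
move=> b nb; rewrite mxE; case: eqP => [e|]; last by rewrite mul0r.
by case/eqP: nb; apply: val_inj; rewrite /= -e inordK.
Qed.

Lemma sl2Y_bvec d (l : int) : sl2Y d *m bvec d l = (l + 1)%:~R *: bvec d (l + 1).
Proof.
apply/matrixP => a b; rewrite ord1 sl2Y_coef mxE !bvecE inordK; last first.
  exact: leq_ltn_trans (leq_pred a) (ltn_ord a).
case: a => [[|a] lt_a] /=.
  by rewrite mul0r; case: eqP => [<-|]; rewrite ?mulr0z ?mul0r ?mulr0.
have -> : a.+1%:Z = a%:Z + 1 by rewrite -PoszD addn1.
rewrite (inj_eq (addIr _)); case: eqP => [<-|]; rewrite ?mulr0 //.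
by rewrite intrD -natr1.
Qed.

Lemma sl2X_bvec d (l : int) :
  sl2X d *m bvec d l = (d%:Z - l + 1)%:~R *: bvec d (l - 1).
Proof.
apply/matrixP => a b; rewrite ord1 sl2X_coef mxE !bvecE.
have [lt_ad|le_da] := ltnP a d.
  have -> : (a%:Z == l - 1) = (a.+1%:Z == l).
    by apply/idP/idP => /eqP e; apply/eqP; lia.
  rewrite inordK //.
  case: eqP => [<-|]; rewrite ?mulr0 //.
  by have -> : d%:Z - a.+1%:Z + 1 = (d - a)%N by lia.
have -> : (d - a = 0)%N by lia.
rewrite mul0r; case: eqP => [e|]; rewrite ?mulr0 //.
have -> : d%:Z - l + 1 = 0 by have := ltn_ord a; lia.
by rewrite mulr0z mul0r.
Qed.

Section SymBilinear.
Variables (p q : nat) (B : 'cV[algC]_p -> 'cV[algC]_p -> 'cV[algC]_q).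
Hypothesis hB : sym_bilinear B.

Lemma sym_bilinear0r u : B u 0 = 0.
Proof.
have := hB.1 u 1 0 0; rewrite !scale1r addr0 -{1}[B u 0]addr0.
by move/addrI.
Qed.

Lemma sym_bilinearZr u a v : B u (a *: v) = a *: B u v.
Proof. by have := hB.1 u a v 0; rewrite !addr0 sym_bilinear0r addr0. Qed.

Lemma sym_bilinear0l u : B 0 u = 0.
Proof. by rewrite hB.2 sym_bilinear0r. Qed.

Lemma sym_bilinearZl u a v : B (a *: v) u = a *: B v u.
Proof. by rewrite hB.2 sym_bilinearZr hB.2. Qed.

End SymBilinear.

Arguments binomZ : simpl never.

Definition alt_binom_sum (r m : nat) (b e : int) : algC :=
  \sum_(0 <= s < (2 * m).+1)
    (-1) ^+ s * ('C(2 * m, s))%:R * binomZ (r - s)%:Z b * binomZ (r - 2 * m + s)%:Z e.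

Section AltBinomSum.
Variables (r m : nat).
Hypothesis hm : (2 * m <= r)%N.
Local Notation S := (alt_binom_sum r m).

Lemma alt_binom_sum_rec (b e : int) :
  (2 * r%:Z - 2 * m%:Z - b - e)%:~R * S b e =
  (b + 1)%:~R * S (b + 1) e + (e + 1)%:~R * S b (e + 1).
Proof.
rewrite !mulr_sumr -big_split /=; apply: eq_big_nat => s /andP[_ lt_s].
set c := _ * _%:R; set a := (r - s)%:Z; set A := (r - 2 * m + s)%:Z.
have -> : (b + 1)%:~R * (c * binomZ a (b + 1) * binomZ A e) =
          c * ((b + 1)%:~R * binomZ a (b + 1)) * binomZ A e by ring.
have -> : (e + 1)%:~R * (c * binomZ a b * binomZ A (e + 1)) =
          c * binomZ a b * ((e + 1)%:~R * binomZ A (e + 1)) by ring.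
rewrite !mul_binomZ_left.
have -> : 2 * r%:Z - 2 * m%:Z - b - e = (a - b) + (A - e) by rewrite /a /A; lia.
rewrite intrD; ring.
Qed.

Lemma alt_binom_sum_eq0 (b e : int) : (r%:Z < b) || (r%:Z < e) -> S b e = 0.
Proof.
move=> out; rewrite /alt_binom_sum big1_seq // => s /andP[_].
rewrite mem_index_iota => lt_s.
case/orP: out => ?; [rewrite (@binomZ_small _ b) | rewrite (@binomZ_small _ e)];
  rewrite ?mulr0 ?mul0r //; lia.
Qed.

Lemma alt_binom_sum_diag i : (i <= 2 * m)%N ->
  S (r - i)%:Z (r - 2 * m + i)%:Z = (-1) ^+ i * ('C(2 * m, i))%:R.
Proof.
move=> le_i; rewrite /alt_binom_sum (bigD1_seq i) ?mem_index_iota ?iota_uniq //=.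
rewrite big1_seq ?addr0 => [|s /andP[ne_si]]; first by rewrite !binomZ_nat !binn !mulr1.
rewrite mem_index_iota => lt_s.
have [lt_si|gt_si|eq_si] := ltngtP s i; last by rewrite eq_si eqxx in ne_si.
  by rewrite (@binomZ_small _ (r - 2 * m + i)%:Z) ?mulr0 //; lia.
by rewrite (@binomZ_small _ (r - i)%:Z) ?mulr0 ?mul0r //; lia.
Qed.

Lemma alt_binom_sum_support k i : (i <= r)%N ->
  S (r%:Z - i%:Z) (r%:Z - ((2 * m + k)%:Z - i%:Z)) =
  \sum_((i - k)%N <= s < (minn (2 * m) i).+1)
     ((-1) ^+ s * ('C(2 * m, s))%:R * ('C(r - s, r - i))%:R
       * binomZ (r - 2 * m + s)%:Z (r%:Z - ((2 * m + k)%:Z - i%:Z))).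
Proof.
move=> le_ir; set e := r%:Z - (_ - _); have -> : r%:Z - i%:Z = (r - i)%N by lia.
have [lt_i|le_i] := ltnP (2 * m + k) i.
  by rewrite alt_binom_sum_eq0 ?big_geq //; [lia | apply/orP; right; rewrite /e; lia].
rewrite /alt_binom_sum (@big_cat_nat _ _ _ (i - k)) //=; last lia.
rewrite (@big_cat_nat _ _ _ (minn (2 * m) i).+1 (i - k)) //=; [|lia|lia].
rewrite big1_seq ?add0r => [|s]; last first.
  rewrite mem_index_iota => /andP[_ lt_s].
  by rewrite (@binomZ_small _ e) ?mulr0 // /e; lia.
rewrite [X in _ + X]big1_seq ?addr0 // => s.
rewrite mem_index_iota => /andP[_ /andP[lt_s le_s]].
by rewrite (@binomZ_small _ (r - i)%N) ?mulr0 ?mul0r //; lia.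
Qed.

End AltBinomSum.

Section Equivariance.
Variables (r m n : nat) (B : 'cV[algC]_r.+1 -> 'cV[algC]_r.+1 -> 'cV[algC]_n.+1).
Hypotheses (hB : sym_bilinear B) (heq : sl2_equivariant B) (hm : (2 * m <= r)%N).

Lemma qcoef_negl k (i j : int) : i < 0 -> qcoef B k i j = 0.
Proof. by case: i => // i _; rewrite /qcoef sym_bilinear0l // mxE. Qed.

Lemma qcoef_negr k (i j : int) : j < 0 -> qcoef B k i j = 0.
Proof. by case: j => // j _; rewrite /qcoef sym_bilinear0r // mxE. Qed.

Lemma qcoef_sl2X k (i j : int) : (k < n)%N ->
  (n - k)%:R * qcoef B k.+1 i j =
  (r%:Z - i + 1)%:~R * qcoef B k (i - 1) j + (r%:Z - j + 1)%:~R * qcoef B k i (j - 1).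
Proof.
move=> lt_kn.
have := congr1 (fun w : 'cV[algC]_n.+1 => w (inord k) 0) (heq.1 (bvec r i) (bvec r j)).
rewrite /= sl2X_coef !inordK 1?ltnW // !mxE sl2X_bvec sl2X_bvec.
by rewrite sym_bilinearZl ?sym_bilinearZr // !mxE => <-.
Qed.

Lemma qcoef_sl2Y (i j : int) :
  (i + 1)%:~R * qcoef B 0 (i + 1) j + (j + 1)%:~R * qcoef B 0 i (j + 1) = 0.
Proof.
have := congr1 (fun w : 'cV[algC]_n.+1 => w (inord 0) 0) (heq.2.2 (bvec r i) (bvec r j)).
rewrite /= sl2Y_coef inordK // mul0r !mxE !sl2Y_bvec.
by rewrite sym_bilinearZl ?sym_bilinearZr // !mxE.
Qed.

Local Notation lambda := (qcoef B 0 0 (2 * m)%:Z).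
Local Notation S := (alt_binom_sum r m).

Lemma qcoef0_signed_binom i : (i <= 2 * m)%N ->
  qcoef B 0 i ((2 * m)%:Z - i%:Z) = (-1) ^+ i * ('C(2 * m, i))%:R * lambda.
Proof.
elim: i => [|i IH] le_i; first by rewrite subr0 expr0 bin0 !mul1r.
have := qcoef_sl2Y i ((2 * m)%:Z - i.+1%:Z).
have -> : (2 * m)%:Z - i.+1%:Z + 1 = (2 * m)%:Z - i%:Z by lia.
have -> : ((2 * m)%:Z - i%:Z)%:~R = (2 * m - i)%:R :> algC by rewrite subzn // ltnW.
rewrite -PoszD addn1 -pmulrn (IH (ltnW le_i)) => /eqP; rewrite addr_eq0 => /eqP.
have binS : i.+1%:R * ('C(2 * m, i.+1))%:R = (2 * m - i)%:R * ('C(2 * m, i))%:R :> algC.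
  by rewrite -!natrM mul_bin_left.
move=> E; apply: (@mulfI _ i.+1%:R); first by rewrite pnatr_eq0.
rewrite E; transitivity (- ((-1) ^+ i * lambda) * ((2 * m - i)%:R * ('C(2 * m, i))%:R)).
  by ring.
by rewrite -binS exprS; ring.
Qed.

Lemma qcoef0_closed_form (i j : int) : i + j = (2 * m)%:Z ->
  qcoef B 0 i j = lambda * S (r%:Z - i) (r%:Z - j).
Proof.
case: i => [i|i] hij; last first.
  by rewrite qcoef_negl // alt_binom_sum_eq0 ?mulr0 //; apply/orP; left; lia.
have [lt_i|le_i] := ltnP (2 * m) i.
  by rewrite qcoef_negr ?alt_binom_sum_eq0 ?mulr0 //; [apply/orP; right|]; lia.
have -> : j = (2 * m)%:Z - i%:Z by lia.
have -> : r%:Z - i%:Z = (r - i)%N by lia.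
have -> : r%:Z - ((2 * m)%:Z - i%:Z) = (r - 2 * m + i)%N by lia.
by rewrite qcoef0_signed_binom // alt_binom_sum_diag // mulrC.
Qed.

Lemma qcoef_closed_form k : (k <= n)%N -> forall i j : int, i + j = (2 * m + k)%:Z ->
  ('C(n, k))%:R * qcoef B k i j = lambda * S (r%:Z - i) (r%:Z - j).
Proof.
elim: k => [_|k IH lt_kn] i j hij.
  by rewrite addn0 in hij; rewrite bin0 mul1r qcoef0_closed_form.
have IHl := IH (ltnW lt_kn) (i - 1) j ltac:(lia).
have IHr := IH (ltnW lt_kn) i (j - 1) ltac:(lia).
have binS : k.+1%:R * ('C(n, k.+1))%:R = ('C(n, k))%:R * (n - k)%:R :> algC.
  by rewrite -!natrM mul_bin_left mulnC.
apply: (@mulfI _ k.+1%:R); first by rewrite pnatr_eq0.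
rewrite mulrA binS -mulrA qcoef_sl2X // mulrDr !(mulrCA ('C(n, k))%:R) IHl IHr.
have -> : r%:Z - (i - 1) = r%:Z - i + 1 by lia.
have -> : r%:Z - (j - 1) = r%:Z - j + 1 by lia.
rewrite !(mulrCA _ lambda) -mulrDr -alt_binom_sum_rec //.
have -> : 2 * r%:Z - 2 * m%:Z - (r%:Z - i) - (r%:Z - j) = k.+1 by lia.
by rewrite -pmulrn mulrCA.
Qed.

End Equivariance.

Theorem mainTheorem3 (r m n : nat)
  (B : 'cV[algC]_(r.+1) -> 'cV[algC]_(r.+1) -> 'cV[algC]_(n.+1))
  (hr : (2 <= r)%N) (hm : (2 * m <= r)%N) (hn : n = (2 * r - 4 * m)%N)
  (hB : sym_bilinear B) (heq : sl2_equivariant B) :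
  let lambda := qcoef B 0 0%:Z (2 * m)%:Z in
  forall (k i : nat), (k <= n./2)%N -> (i <= r)%N ->
  let j : int := (2 * m + k)%:Z - i%:Z in
  ('C(n, k))%:R * qcoef B k i%:Z j =
  lambda * \sum_((i - k)%N <= s < (minn (2 * m) i).+1)
     ((-1) ^+ s * ('C(2 * m, s))%:R * ('C(r - s, r - i))%:R
       * binomZ (r - 2 * m + s)%:Z (r%:Z - j)).
Proof.
move=> lambda k i le_kn le_ir j.
rewrite (@qcoef_closed_form r m n B hB heq hm) ?alt_binom_sum_support //.
  by apply: leq_trans le_kn _; rewrite leq_half_double -addnn; lia.
by rewrite /j; lia.
Qed.
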